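(* Let $h$ be a reduced function, $n\ge4$, and let $E^{(n)}$ and $\mathcal E^{(n)}$ be defined on pure states by $$E^{(n)}(|\psi\rangle)=\frac12\sum_{i=1}^n h(\rho^{A_i}),\qquad \mathcal E^{(n)}(|\psi\rangle)=\frac12\sum_{S\in\mathcal T_n}h(\rho^S),$$ where $\mathcal T_n$ is the set of nonempty subsets $S\subseteq\{A_1,\dots,A_n\}$ with $|S|<n/2$ together with (for even $n$) those with $|S|=n/2$ and $A_n\notin S$. Then for every pure state $|\psi\rangle\in\mathcal H^{A_1\cdots A_n}$, $E^{(n)}(|\psi\rangle)\le\mathcal E^{(n)}(|\psi\rangle)$, with strict inequality if and only if $|\psi\rangle$ is not fully separable, i.e. not of the form $|\psi_1\rangle^{A_1}\otimes\cdots\otimes|\psi_n\rangle^{A_n}$.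
   Context: All Hilbert spaces are finite-dimensional; $\rho^X$ denotes the reduced state of $|\psi\rangle$ on the set $X$ of parties. Reduced function: a function $h$ from density matrices (of any finite dimension) to $[0,\infty)$ that is concave, depends only on the multiset of nonzero eigenvalues of its argument, and satisfies $h(\rho)=0$ iff $\rho$ is pure. *)

From HB Require Import structures.
From mathcomp Require Import all_boot all_order all_algebra.
From mathcomp Require Import complex.
From mathcomp Require Import reals.

Set Implicit Arguments.
Unset Strict Implicit.
Unset Printing Implicit Defensive.

Import Order.TTheory GRing.Theory Num.Theory.
Local Open Scope ring_scope.

Section QInfo.
Variable R : realType.
Local Notation C := R[i].

Definition adjmx m k (A : 'M[C]_(m, k)) : 'M[C]_(k, m) := (map_mx Num.conj A)^T.

Definition density m (rho : 'M[C]_m) : Prop :=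
  [/\ adjmx rho = rho,
      (forall v : 'cV[C]_m, 0 <= (adjmx v *m rho *m v) 0 0)
    & \tr rho = 1].

Definition pure_dm m (rho : 'M[C]_m) : Prop :=
  exists v : 'cV[C]_m, rho = v *m adjmx v.

(* same multiset of nonzero eigenvalues: every nonzero complex number has the
   same multiplicity as a root of the characteristic polynomials *)
Definition same_nz_spectrum m k (rho : 'M[C]_m) (sigma : 'M[C]_k) : Prop :=
  forall l : C, l != 0 -> mup l (char_poly rho) = mup l (char_poly sigma).

Definition reduced_function (h : forall m, 'M[C]_m -> R) : Prop :=
  [/\ (forall m (rho : 'M[C]_m), density rho -> 0 <= h m rho),
      (forall m (rho sigma : 'M[C]_m) (t : R), density rho -> density sigma ->
          0 <= t <= 1 ->
          t * h m rho + (1 - t) * h m sigma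
            <= h m ((real_complex R t) *: rho + (real_complex R (1 - t)) *: sigma)),
      (forall m k (rho : 'M[C]_m) (sigma : 'M[C]_k), density rho -> density sigma ->
          same_nz_spectrum rho sigma -> h m rho = h k sigma)
    & (forall m (rho : 'M[C]_m), density rho -> (h m rho = 0 <-> pure_dm rho))].

(* n parties, party i has local dimension (d i).+1 >= 1 *)
Variables (n : nat) (d : 'I_n -> nat).

(* computational basis labels of H^{A_1...A_n} *)
Definition cfg := {dffun forall i : 'I_n, 'I_(d i).+1}.

(* basis labels of H^S, represented by full labels that are 0 outside S *)
Definition subcfg (S : {set 'I_n}) :=
  {x : cfg | [forall i, (i \notin S) ==> (x i == ord0)]}.

Definition glue (S : {set 'I_n}) (x z : cfg) : cfg :=
  [ffun i => if i \in S then x i else z i].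

(* reduced state rho^S of the (pure) state psi : partial trace over ~: S *)
Definition redmx (psi : cfg -> C) (S : {set 'I_n}) : 'M[C]_#|{: subcfg S}| :=
  \matrix_(a, b)
    \sum_(z : subcfg (~: S))
       psi (glue S (val (enum_val a)) (val z))
     * Num.conj (psi (glue S (val (enum_val b)) (val z))).

Definition normalized (psi : cfg -> C) : Prop :=
  \sum_(x : cfg) psi x * Num.conj (psi x) = 1.

Definition fully_separable (psi : cfg -> C) : Prop :=
  exists phi : forall i : 'I_n, 'I_(d i).+1 -> C,
    forall x : cfg, psi x = \prod_(i < n) phi i (x i).

(* T_n : nonempty S with |S| < n/2, or |S| = n/2 and A_n (index n-1) not in S *)
Definition Tn : pred {set 'I_n} := fun S =>
  (S != set0) &&
  ((#|S|.*2 < n)%N || ((#|S|.*2 == n)%N && [forall i in S, (i : nat) != n.-1])).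

Definition E_n (h : forall m, 'M[C]_m -> R) (psi : cfg -> C) : R :=
  2^-1 * \sum_(i < n) h _ (redmx psi [set i]).

Definition EE_n (h : forall m, 'M[C]_m -> R) (psi : cfg -> C) : R :=
  2^-1 * \sum_(S : {set 'I_n} | Tn S) h _ (redmx psi S).

End QInfo.

From HB Require Import structures.
From mathcomp Require Import all_boot all_order all_algebra.
From mathcomp Require Import complex reals.
From mathcomp Require Import ring lra zify.
Import Order.TTheory GRing.Theory Num.Theory.
Local Open Scope ring_scope.
Set Implicit Arguments.
Unset Strict Implicit.
Unset Printing Implicit Defensive.

(* The singleton terms of EE_n are exactly E_n, so EE_n - E_n is half the sum
   of h(rho^S) over the cuts S in T_n with |S| <> 1; it is nonnegative and
   vanishes iff all these reduced states are pure (only nonnegativity and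
   faithfulness of h are used, not concavity or spectral invariance).
   rho^S is the Gram matrix of the coefficient matrix of psi across the cut S,
   so it is pure iff that matrix has rank one, i.e. iff
   psi(x) psi(y) = psi(x_S y_S') psi(y_S x_S') for all x, y.  Since T_n holds one
   side of every bipartition, for n >= 4 this exchange property holds for every
   two-party cut; fixing y with psi(y) <> 0 it is stable under intersection of
   cuts, and {i} = {i,j} /\ {i,k} then factors psi into one-party functions.
   Conversely, every reduced state of a product state is pure. *)

Section Labels.
Variables (n : nat) (d : 'I_n -> nat).
Implicit Types (S T : {set 'I_n}) (x y z : cfg d).

Lemma glueE S x z i : glue S x z i = if i \in S then x i else z i.
Proof. by rewrite ffunE. Qed.

Lemma glue_id S x : glue S x x = x.
Proof. by apply/ffunP=> i; rewrite glueE if_same. Qed.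

Lemma glue0 x z : glue set0 x z = z.
Proof. by apply/ffunP=> i; rewrite glueE inE. Qed.

Lemma glueT x z : glue setT x z = x.
Proof. by apply/ffunP=> i; rewrite glueE inE. Qed.

Lemma glueC S x y : glue S y x = glue (~: S) x y.
Proof. by apply/ffunP=> i; rewrite !glueE inE; case: (i \in S). Qed.

Lemma glue_glue S T x z : glue S (glue T x z) z = glue (S :&: T) x z.
Proof. by apply/ffunP=> i; rewrite !glueE inE; case: (i \in S); case: (i \in T). Qed.

Lemma glue1_eq i x y z : x i = y i -> glue [set i] x z = glue [set i] y z.
Proof. by move=> e; apply/ffunP=> j; rewrite !glueE inE; case: eqP => // ->. Qed.

Lemma subcfg_out S (s : subcfg d S) i : i \notin S -> val s i = ord0.
Proof. by move=> iS; have /forallP/(_ i)/implyP/(_ iS)/eqP := valP s. Qed.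

Lemma restr_subproof S x :
  [forall i, (i \notin S) ==> ([ffun i => if i \in S then x i else ord0] i == ord0)].
Proof. by apply/forallP=> i; apply/implyP=> iS; rewrite ffunE (negbTE iS). Qed.

Definition restr S x : subcfg d S :=
  exist _ [ffun i => if i \in S then x i else ord0] (restr_subproof S x).

Lemma glue_restr S x y : glue S (val (restr S x)) (val (restr (~: S) y)) = glue S x y.
Proof. by apply/ffunP=> i; rewrite !glueE !ffunE inE; case: (i \in S). Qed.

Lemma big_glue (V : nmodType) S (F : cfg d -> V) :
  \sum_x F x = \sum_(s : subcfg d S) \sum_(t : subcfg d (~: S)) F (glue S (val s) (val t)).
Proof.
rewrite pair_big /= (reindex (fun p : subcfg d S * subcfg d (~: S) =>
  glue S (val p.1) (val p.2))) //=.
exists (fun x => (restr S x, restr (~: S) x)) => [[s t] _ | x _]; last first.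
  by rewrite glue_restr glue_id.
congr pair; apply/val_inj/ffunP=> i /=; rewrite ffunE glueE.
  by case: (boolP (i \in S)) => // iS; rewrite (subcfg_out s iS).
rewrite inE; case: (boolP (i \in S)) => //= iS.
by rewrite (subcfg_out t) // inE iS.
Qed.

End Labels.

Section Exchange.
Variables (F : fieldType) (n : nat) (d : 'I_n -> nat) (psi : cfg d -> F).
Implicit Types (S T : {set 'I_n}) (x y : cfg d).

Definition exchange S : Prop :=
  forall x y, psi x * psi y = psi (glue S x y) * psi (glue S y x).

Lemma exchangeC S : exchange S -> exchange (~: S).
Proof. by move=> eS x y; rewrite -!glueC mulrC. Qed.

Variable y0 : cfg d.
Hypothesis psi_y0 : psi y0 != 0.
Local Notation p0 := (psi y0).
Local Notation pad S x := (glue S x y0).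

Definition splits S : Prop :=
  forall x, psi x * p0 = psi (pad S x) * psi (pad (~: S) x).

Lemma exchange_splits S : exchange S -> splits S.
Proof. by move=> eS x; rewrite eS [glue S y0 x]glueC. Qed.

Lemma splits_cells S T x : splits S -> splits T ->
  psi x * p0 ^+ 3 = psi (pad (S :&: T) x) * psi (pad (~: S :&: T) x)
                    * psi (pad (S :&: ~: T) x) * psi (pad (~: S :&: ~: T) x).
Proof.
move=> sS sT; have eS := sT (pad S x); have eCS := sT (pad (~: S) x).
rewrite !glue_glue ![T :&: _]setIC ![~: T :&: _]setIC in eS eCS.
transitivity ((psi x * p0) * p0 * p0); first ring.
rewrite sS.
transitivity ((psi (pad S x) * p0) * (psi (pad (~: S) x) * p0)); first ring.
by rewrite eS eCS; ring.
Qed.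

Lemma splitsI S T : splits S -> splits T -> splits (S :&: T).
Proof.
(* Compare the four-cell factorizations of x and of x padded by y0 on S :&: T. *)
move=> sS sT x; have := splits_cells (pad (~: (S :&: T)) x) sS sT.
rewrite !glue_glue.
have [-> -> -> ->] : [/\ S :&: T :&: ~: (S :&: T) = set0,
    ~: S :&: T :&: ~: (S :&: T) = ~: S :&: T,
    S :&: ~: T :&: ~: (S :&: T) = S :&: ~: T
  & ~: S :&: ~: T :&: ~: (S :&: T) = ~: S :&: ~: T].
  by split; apply/setP=> i; rewrite !inE; case: (i \in S); case: (i \in T).
rewrite glue0 => cellsC; apply: (mulIf (expf_neq0 3 psi_y0)).
transitivity (p0 * (psi x * p0 ^+ 3)); first ring.
rewrite (splits_cells x sS sT).
transitivity (psi (pad (S :&: T) x) * (psi (pad (~: (S :&: T)) x) * p0 ^+ 3)); last ring.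
by rewrite cellsC; ring.
Qed.

Lemma pad_prod (s1 : forall j, splits [set j]) x A :
  psi (pad A x) * p0 ^+ #|A| = p0 * \prod_(j in A) psi (pad [set j] x).
Proof.
elim: {A}_.+1 {-2}A (ltnSn #|A|) => // k IH A ltAk.
have [->|[j jA]] := set_0Vmem A; first by rewrite glue0 cards0 big_set0 mulr1.
have := s1 j (pad A x); rewrite !glue_glue (setIidPl _) ?sub1set // setIC -setDE.
rewrite (big_setD1 j jA) /= (cardsD1 j A) jA exprS mulrA => ->.
rewrite -mulrA IH; first by ring.
by move: ltAk; rewrite (cardsD1 j A) jA.
Qed.

Lemma factor_of_splits1 : (0 < n)%N -> (forall j, splits [set j]) ->
  exists phi : forall i, 'I_(d i).+1 -> F, forall x, psi x = \prod_(i < n) phi i (x i).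
Proof.
(* The single-party pads multiply to psi x * p0 ^+ n.-1; the first factor absorbs the surplus. *)
move=> n_gt0 s1; pose c (i : 'I_n) := if val i == 0%N then p0^-1 ^+ n.-1 else 1.
exists (fun i a => if [pick x : cfg d | x i == a] is Some x then psi (pad [set i] x) * c i else 0).
move=> x; under eq_bigr => i _.
  case: pickP => [xi /eqP/glue1_eq -> | /(_ x)]; last by rewrite eqxx.
  over.
rewrite big_split /=.
have -> : \prod_(i < n) c i = p0^-1 ^+ n.-1.
  rewrite (bigD1 (Ordinal n_gt0)) //= big1 ?mulr1 // => i i_neq0.
  by rewrite /c ifN //; apply: contraNneq i_neq0 => i0; apply: val_inj.
have := pad_prod s1 x setT; rewrite glueT cardsT card_ord.
under eq_bigl do rewrite in_setT.
move=> prod1; have -> : \prod_(i < n) psi (pad [set i] x) = psi x * p0 ^+ n.-1.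
  by apply: (mulfI psi_y0); rewrite -prod1 -[in LHS](prednK n_gt0) exprS; ring.
by rewrite exprVn mulfK ?expf_neq0.
Qed.

End Exchange.

Section RankOneGram.
Variables (C : numClosedFieldType) (I Z : finType) (U : I -> Z -> C) (V : I -> C).
Hypothesis gram_rank1 : forall a b, \sum_z U a z * (U b z)^* = V a * (V b)^*.

(* Equality case of the Cauchy-Schwarz inequality. *)
Lemma gram_rank1_proportional a b z : V b * U a z = V a * U b z.
Proof.
pose w z := V b * U a z - V a * U b z.
have w_norm0 : \sum_z w z * (w z)^* = 0.
  transitivity (\sum_z (V b * (V b)^* * (U a z * (U a z)^*)
      - V b * (V a)^* * (U a z * (U b z)^*) - V a * (V b)^* * (U b z * (U a z)^*)
      + V a * (V a)^* * (U b z * (U b z)^*))).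
    by apply: eq_bigr => z' _; rewrite /w rmorphB !rmorphM /=; ring.
  by rewrite big_split /= !sumrB -!mulr_sumr !gram_rank1; ring.
have /eqP := psumr_eq0P (fun z _ => mul_conjC_ge0 (w z)) w_norm0 (i := z) isT.
by rewrite mul_conjC_eq0 subr_eq0 => /eqP.
Qed.

Lemma gram_rank1_exchange c : V c != 0 ->
  forall a b z z', U a z * U b z' = U a z' * U b z.
Proof.
move=> Vc_neq0 a b z z'; apply: (mulfI (mulf_neq0 Vc_neq0 Vc_neq0)).
transitivity ((V c * U a z) * (V c * U b z')); first ring.
rewrite !(gram_rank1_proportional _ c).
transitivity ((V a * U c z') * (V b * U c z)); first ring.
by rewrite -!(gram_rank1_proportional _ c); ring.
Qed.

End RankOneGram.

Section Gram.
Variable R : realType.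
Local Notation C := R[i].

Lemma adjmxK m k (A : 'M[C]_(m, k)) : adjmx (adjmx A) = A.
Proof. by apply/matrixP=> a b; rewrite !mxE conjCK. Qed.

Lemma adjmx_mul m k l (A : 'M[C]_(m, k)) (B : 'M[C]_(k, l)) :
  adjmx (A *m B) = adjmx B *m adjmx A.
Proof. by rewrite /adjmx map_mxM trmx_mul. Qed.

Lemma gram_entry m k (W : 'M[C]_(m, k)) a b :
  (W *m adjmx W) a b = \sum_j W a j * (W b j)^*.
Proof. by rewrite mxE; apply: eq_bigr => j _; rewrite !mxE. Qed.

Lemma gram_density m k (W : 'M[C]_(m, k)) :
  \tr (W *m adjmx W) = 1 -> density (W *m adjmx W).
Proof.
split=> // [|v]; first by rewrite adjmx_mul adjmxK.
have -> : adjmx v *m (W *m adjmx W) *m v = (adjmx v *m W) *m adjmx (adjmx v *m W).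
  by rewrite adjmx_mul adjmxK !mulmxA.
rewrite gram_entry.
by apply: sumr_ge0 => j _; apply: mul_conjC_ge0.
Qed.

Lemma gram_exchange_of_pure m k (W : 'M[C]_(m, k)) :
  pure_dm (W *m adjmx W) -> \tr (W *m adjmx W) != 0 ->
  forall a b j j', W a j * W b j' = W a j' * W b j.
Proof.
move=> [v Wv] tr_neq0.
have gram_v a b : \sum_j W a j * (W b j)^* = v a 0 * (v b 0)^*.
  by rewrite -gram_entry Wv gram_entry big_ord1.
have [c vc_neq0 | v0] := pickP (fun a => v a 0 != 0).
  exact: (gram_rank1_exchange gram_v vc_neq0).
move: tr_neq0; rewrite /mxtrace big1 ?eqxx // => a _.
by rewrite gram_entry gram_v; move/negbFE/eqP: (v0 a) => ->; rewrite mul0r.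
Qed.

Lemma gram_pure_of_rank1 m k (W : 'M[C]_(m, k)) (f : 'cV[C]_m) (g : 'rV[C]_k) :
  W = f *m g -> pure_dm (W *m adjmx W).
Proof.
move=> ->; pose N := (g *m adjmx g) 0 0.
have N_ge0 : 0 <= N by rewrite /N gram_entry; apply: sumr_ge0 => j _; apply: mul_conjC_ge0.
exists (sqrtC N *: f); apply/matrixP=> a b.
rewrite !gram_entry big_ord1 !mxE rmorphM /= geC0_conj ?sqrtC_ge0 //.
transitivity (f a 0 * (f b 0)^* * N).
  rewrite /N gram_entry mulr_sumr; apply: eq_bigr => j _.
  by rewrite !mxE !big_ord1 rmorphM; ring.
by rewrite mulrACA -expr2 sqrtCK; ring.
Qed.

End Gram.

Section ReducedState.
Variables (R : realType) (n : nat) (d : 'I_n -> nat) (psi : cfg d -> R[i]).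
Variable S : {set 'I_n}.
Local Notation inside a := (val (enum_val (A := {: subcfg d S}) a)).
Local Notation outside j := (val (enum_val (A := {: subcfg d (~: S)}) j)).

Definition cut_matrix : 'M[R[i]]_(#|{: subcfg d S}|, #|{: subcfg d (~: S)}|) :=
  \matrix_(a, j) psi (glue S (inside a) (outside j)).

Lemma redmx_gram : redmx psi S = cut_matrix *m adjmx cut_matrix.
Proof.
apply/matrixP=> a b; rewrite gram_entry mxE.
rewrite (reindex (enum_val : 'I_#|{: subcfg d (~: S)}| -> _)) /=.
  by apply: eq_bigr => j _; rewrite !mxE.
exact: onW_bij (enum_val_bij _).
Qed.

Lemma tr_redmx : \tr (redmx psi S) = \sum_x psi x * (psi x)^*.
Proof.
rewrite (big_glue S) /mxtrace (reindex (enum_val : 'I_#|{: subcfg d S}| -> _)) /=.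
  by apply: eq_bigr => a _; rewrite mxE.
exact: onW_bij (enum_val_bij _).
Qed.

Lemma redmx_density : normalized psi -> density (redmx psi S).
Proof. by move=> psi1; rewrite redmx_gram; apply: gram_density; rewrite -redmx_gram tr_redmx. Qed.

Lemma exchange_of_pure_redmx : normalized psi -> pure_dm (redmx psi S) -> exchange psi S.
Proof.
rewrite /normalized -tr_redmx redmx_gram => tr1 pure x y.
have tr_neq0 : \tr (cut_matrix *m adjmx cut_matrix) != 0 by rewrite tr1 oner_neq0.
have := gram_exchange_of_pure pure tr_neq0 (enum_rank (restr S x)) (enum_rank (restr S y))
  (enum_rank (restr (~: S) x)) (enum_rank (restr (~: S) y)).
by rewrite !mxE !enum_rankK !glue_restr !glue_id => ->.
Qed.

Lemma pure_redmx_of_separable : fully_separable psi -> pure_dm (redmx psi S).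
Proof.
move=> [phi psiE]; rewrite redmx_gram.
apply: (gram_pure_of_rank1 (f := \col_a \prod_(i in S) phi i (inside a i))
                           (g := \row_j \prod_(i in ~: S) phi i (outside j i))).
apply/matrixP=> a j.
rewrite !mxE big_ord1 !mxE psiE (bigID (mem S)) /=.
congr (_ * _); apply: eq_big => [i|i iS]; rewrite ?inE ?glueE ?iS //.
by rewrite (negbTE iS).
Qed.

End ReducedState.

Section BipartitionRepresentatives.
Variable n : nat.
Implicit Types (S : {set 'I_n}) (i : 'I_n).

Lemma Tn_or_TnC S : S != set0 -> ~: S != set0 -> Tn S || Tn (~: S).
Proof.
rewrite /Tn => -> -> /=.
have cardC : #|~: S| = (n - #|S|)%N by rewrite [LHS]cardsCs setCK card_ord.
have S_le : (#|S| <= n)%N by rewrite -[n in (_ <= n)%N]card_ord max_card.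
rewrite cardC; case: (ltngtP #|S|.*2 n) => [//|gt|half].
  by apply/orP; right; apply/orP; left; lia.
rewrite /=; case: (boolP [forall i in S, val i != n.-1]) => //= /forallPn [k].
rewrite negb_imply negbK => /andP[kS /eqP k_last].
have -> : ((n - #|S|).*2 == n)%N by lia.
apply/orP; right; apply/forall_inP => j; rewrite inE; apply: contra => /eqP j_last.
by rewrite (_ : j = k) //; apply: val_inj; rewrite /= k_last j_last.
Qed.

Lemma Tn_set1 : (2 < n)%N -> forall i, Tn [set i].
Proof. by move=> n3 i; rewrite /Tn cards1 n3 andbT; apply/set0Pn; exists i; rewrite inE. Qed.

Lemma set1_pairI : (2 < n)%N -> forall i,
  exists j k, [/\ i != j, i != k & [set i] = [set i; j] :&: [set i; k]].
Proof.
move=> n3 i; have : (1 < #|[set~ i]|)%N by rewrite cardsC1 card_ord; lia.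
case/card_gt1P=> j [k [jNi kNi jk]]; rewrite !inE eq_sym in jNi; rewrite !inE eq_sym in kNi.
exists j, k; split=> //; apply/setP=> l; rewrite !inE.
by case: (eqVneq l i) => //= _; case: (eqVneq l j) => // ->; rewrite (negbTE jk).
Qed.

End BipartitionRepresentatives.

Section Entanglement.
Variables (R : realType) (n : nat) (d : 'I_n -> nat) (psi : cfg d -> R[i]).
Hypothesis psi1 : normalized psi.

Lemma normalized_neq0 : exists y0, psi y0 != 0.
Proof.
have [y0 ? | psi0] := pickP (fun x => psi x != 0); first by exists y0.
move: psi1; rewrite /normalized big1 => [/eqP|x _]; first by rewrite eq_sym oner_eq0.
by move/negbFE/eqP: (psi0 x) => ->; rewrite mul0r.
Qed.

Lemma separable_of_pure_cuts : (4 <= n)%N ->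
  (forall S, Tn S -> #|S| != 1%N -> pure_dm (redmx psi S)) -> fully_separable psi.
Proof.
move=> n4 pure_cut; have [y0 y0_neq0] := normalized_neq0.
have pair_splits j k : j != k -> splits psi y0 [set j; k].
  move=> jk; apply: exchange_splits.
  have card2 : #|[set j; k]| = 2%N by rewrite cards2 jk.
  have cardC : #|~: [set j; k]| = (n - 2)%N by rewrite cardsCs setCK card_ord card2.
  have /orP[TS|TSC] : Tn [set j; k] || Tn (~: [set j; k]).
    by apply: Tn_or_TnC; rewrite -card_gt0 ?card2 ?cardC //; lia.
    by apply: exchange_of_pure_redmx psi1 (pure_cut _ TS _); rewrite card2.
  rewrite -[[set j; k]]setCK; apply/exchangeC/(exchange_of_pure_redmx psi1)/pure_cut => //.
  by rewrite cardC; lia.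
apply: (factor_of_splits1 y0_neq0); first lia.
move=> k; have [j [l [kj kl ->]]] := set1_pairI (ltnW n4) k.
exact: splitsI (pair_splits _ _ kj) (pair_splits _ _ kl).
Qed.

End Entanglement.

Lemma EE_n_split (R : realType) (h : forall m, 'M[R[i]]_m -> R) n (d : 'I_n -> nat)
    (psi : cfg d -> R[i]) : (2 < n)%N ->
  EE_n h psi = E_n h psi + 2^-1 * \sum_(S | Tn S && (#|S| != 1%N)) h _ (redmx psi S).
Proof.
move=> n3; rewrite /EE_n /E_n -mulrDr (bigID (fun S : {set 'I_n} => #|S| == 1%N)) /=.
congr (_ * (_ + _)).
rewrite (eq_bigl (mem [set [set i] | i : 'I_n])) => [|S]; last first.
  apply/andP/imsetP => [[_ /cards1P [k ->]] | [k _ ->]]; first by exists k.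
  by rewrite Tn_set1 // cards1.
by rewrite big_imset //= => k l _ _; apply: set1_inj.
Qed.

Theorem mainTheorem4 (R : realType) (h : forall m, 'M[R[i]]_m -> R)
  (hred : reduced_function h) (n : nat) (hn : (4 <= n)%N) (d : 'I_n -> nat)
  (psi : cfg d -> R[i]) (hpsi : normalized psi) :
  E_n h psi <= EE_n h psi /\ (E_n h psi < EE_n h psi <-> ~ fully_separable psi).
Proof.
have [h_ge0 _ _ h_eq0] := hred.
have h_redmx_ge0 S : 0 <= h _ (redmx psi S) by apply/h_ge0/redmx_density.
have h_redmx_eq0 S : h _ (redmx psi S) = 0 <-> pure_dm (redmx psi S).
  exact/h_eq0/redmx_density.
rewrite EE_n_split ?(ltnW hn) //; set rest := \sum_(S | _) _.
have rest_ge0 : 0 <= rest by apply: sumr_ge0.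
have rest_eq0 : rest = 0 <-> fully_separable psi.
  split=> [/(psumr_eq0P (fun S _ => h_redmx_ge0 S)) rest0 | sep].
    apply: separable_of_pure_cuts => // S TS S1.
    by apply/h_redmx_eq0/rest0; rewrite TS.
  by apply: big1 => S _; apply/h_redmx_eq0/pure_redmx_of_separable.
rewrite -rest_eq0; split; first lra.
split=> [? ?|rest_neq0]; first lra.
have : 0 < rest by rewrite lt_def rest_ge0 andbT; apply/eqP.
lra.
Qed.
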